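(* Let $\mathcal{X}$ be a compact subset of $\mathbb{R}^{Jd}$, $M$ a Borel probability distribution on $\mathcal{X}$, $G_0\in\mathbb{P}$ and $\Pi$ a prior on $\mathbb{P}$. Suppose $G_0$ lies in the weak support of $\Pi$ and $q_j(\mathbf{x};G_0)>0$ for every $j\in\{1,\dots,J\}$ and every $\mathbf{x}\in\mathcal{X}$. Then $G_0$ is in the Kullback–Leibler support of $\Pi$, i.e. for every $\epsilon>0$, $\Pi\{G\in\mathbb{P}: \int_{\mathcal{X}}K(G_0,G\mid\mathbf{x})M(\mathrm{d}\mathbf{x})<\epsilon\}>0$.
   Context: Fix integers $J\ge2$, $d\ge1$, $\mathbf{C}=\{1,\dots,J\}$. Write $\mathbf{x}=(\mathbf{x}_1,\dots,\mathbf{x}_J)$ with $\mathbf{x}_j\in\mathbb{R}^d$ and $k_j(\mathbf{x},\boldsymbol\beta)=\exp(\mathbf{x}_j'\boldsymbol\beta)/\sum_{l\in\mathbf{C}}\exp(\mathbf{x}_l'\boldsymbol\beta)$. $\mathbb{P}$ is the space of Borel probability measures on $\mathbb{R}^d$ with the weak topology; $q_j(\mathbf{x};G)=\int k_j(\mathbf{x},\boldsymbol\beta)G(\mathrm{d}\boldsymbol\beta)$. $G_0$ is in the weak support of $\Pi$ if every weak neighborhood of $G_0$ has positive $\Pi$-probability. $K(G_0,G\mid\mathbf{x})=\sum_{j\in\mathbf{C}}q_j(\mathbf{x};G_0)\log[q_j(\mathbf{x};G_0)/q_j(\mathbf{x};G)]$. *)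

From HB Require Import structures.
From mathcomp Require Import all_boot all_order all_algebra.
From mathcomp Require Import all_classical all_reals all_analysis.
Set Implicit Arguments. Unset Strict Implicit. Unset Printing Implicit Defensive.
Import Order.TTheory GRing.Theory Num.Theory.
Import numFieldNormedType.Exports.
Local Open Scope classical_set_scope.
Local Open Scope ring_scope.

(* R^d, represented as row vectors 'rV[R]_d, with the Borel sigma-algebra
   (generated by the open sets of the Euclidean = product topology). *)
Definition Rd (R : realType) (d : nat) :=
  g_sigma_algebraType (@open 'rV[R]_d).

(* R^{Jd}: x = (x_1,...,x_J) with x_j in R^d, represented as a J x d matrix
   whose j-th row is x_j; Borel sigma-algebra. *)
Definition RJd (R : realType) (J d : nat) :=
  g_sigma_algebraType (@open 'M[R]_(J, d)).

Definition Pspace (R : realType) (d : nat) := probability (Rd R d) R.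

Definition Gint (R : realType) (d : nat) (G : Pspace R d) (f : 'rV[R]_d -> R) : R :=
  fine (\int[G]_(b in [set: Rd R d]) (f b)%:E)%E.

Definition bounded_continuous (R : realType) (d : nat) (f : 'rV[R]_d -> R) :=
  continuous f /\ exists c : R, forall b, `|f b| <= c.

Definition weak_open (R : realType) (d : nat) (U : set (Pspace R d)) : Prop :=
  forall G, U G ->
    exists (n : nat) (f : 'I_n -> 'rV[R]_d -> R) (e : R),
      0 < e /\ (forall i, bounded_continuous (f i)) /\
      [set G' : Pspace R d | forall i, `|Gint G' (f i) - Gint G (f i)| < e]
        `<=` U.

Definition PB (R : realType) (d : nat) :=
  g_sigma_algebraType (@weak_open R d).

Definition xb (R : realType) (J d : nat) (x : 'M[R]_(J, d)) (j : 'I_J)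
  (b : 'rV[R]_d) : R := \sum_(i < d) x j i * b 0 i.

Definition kfun (R : realType) (J d : nat) (x : 'M[R]_(J, d)) (b : 'rV[R]_d)
  (j : 'I_J) : R :=
  expR (xb x j b) / \sum_(l < J) expR (xb x l b).

Definition qfun (R : realType) (J d : nat) (x : 'M[R]_(J, d)) (G : Pspace R d)
  (j : 'I_J) : R :=
  Gint G (fun b => kfun x b j).

Definition KLx (R : realType) (J d : nat) (G0 G : Pspace R d) (x : 'M[R]_(J, d)) : R :=
  \sum_(j < J) qfun x G0 j * ln (qfun x G0 j / qfun x G j).

From HB Require Import structures.
From mathcomp Require Import all_boot all_order all_algebra.
From mathcomp Require Import all_classical all_reals all_analysis.
From mathcomp Require Import lra ring.
Set Implicit Arguments. Unset Strict Implicit. Unset Printing Implicit Defensive.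
Import Order.TTheory GRing.Theory Num.Theory.
Import numFieldNormedType.Exports.
Local Open Scope classical_set_scope.
Local Open Scope ring_scope.

(* Since the logit kernel is bounded and continuous in [beta], each
   [q_j(x; G)] is weakly continuous in [G]; the point is uniformity in
   [x in X].  Cut the kernel off outside a large ball that carries almost all
   of the [G0]-mass: on that ball the kernels at nearby [x] are within a
   factor [expR (- 2 t)] of each other, so finitely many truncated kernels,
   one for each point of a finite net of the compact set [X], define a weak
   neighbourhood of [G0] on which [q_j(x; G) >= th * q_j(x; G0)] for all
   [x in X] (the loss is controlled thanks to a positive lower bound on
   [q_j(x; G0)] over [X]).  There [K(G0, G | x) <= J * ln (1 / th)], which is
   small for [th] close to 1. *)

Section Gint.
Variables (R : realType) (d : nat).
Implicit Types (G : Pspace R d) (f g : 'rV[R]_d -> R).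

Definition bounded_measurable f :=
  measurable_fun [set: Rd R d] f /\ exists c : R, forall b, `|f b| <= c.

Lemma continuous_measurable f : continuous f -> measurable_fun [set: Rd R d] f.
Proof.
move=> /continuousP cf.
apply: (measurability _ (measurable_realfun.RGenOpens.measurableE R)).
move=> _ [_ [a [b ->] <-]]; rewrite setTI; apply: sub_sigma_algebra.
exact/cf/interval_open.
Qed.

Lemma bounded_continuous_measurable f :
  bounded_continuous f -> bounded_measurable f.
Proof. by move=> [cf hc]; split => //; exact: continuous_measurable. Qed.

Lemma bounded_measurable_cst (r : R) : bounded_measurable (fun=> r).
Proof. by split => //; exists `|r|. Qed.

Lemma bounded_measurableB f g :
  bounded_measurable f -> bounded_measurable g -> bounded_measurable (f \- g).
Proof.
move=> [mf [c hc]] [mg [e he]].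
split; first exact: measurable_realfun.measurable_funB.
by exists (c + e) => b; rewrite (le_trans (ler_normB _ _)) // lerD.
Qed.

Lemma bounded_measurableM f g :
  bounded_measurable f -> bounded_measurable g -> bounded_measurable (f \* g).
Proof.
move=> [mf [c hc]] [mg [e he]].
split; first exact: measurable_realfun.measurable_funM.
by exists (c * e) => b; rewrite normrM ler_pM.
Qed.

Lemma bounded_measurable_integrable G f :
  bounded_measurable f -> G.-integrable [set: Rd R d] (EFin \o f).
Proof.
move=> [mf [c hc]]; apply: measurable_bounded_integrable => //.
  exact: (le_lt_trans (probability_le1 _ _) (ltry 1)).
exists c; split; first by rewrite num_real.
by move=> x cx y _; exact: le_trans (hc y) (ltW cx).
Qed.

Lemma GintE G f : Gint G f = (\int[G]_(b in [set: Rd R d]) f b)%R.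
Proof. by []. Qed.

Lemma GintB G f g : bounded_measurable f -> bounded_measurable g ->
  Gint G (f \- g) = Gint G f - Gint G g.
Proof.
by move=> bf bg; rewrite !GintE RintegralB //; exact: bounded_measurable_integrable.
Qed.

Lemma GintZ G (r : R) f : bounded_measurable f ->
  Gint G (fun b => r * f b) = r * Gint G f.
Proof.
by move=> bf; rewrite !GintE RintegralZl //; exact: bounded_measurable_integrable.
Qed.

Lemma Gint_cst G (r : R) : Gint G (fun=> r) = r.
Proof.
rewrite GintE Rintegral_cst // (_ : fine _ = 1) ?mulr1 //.
exact: (congr1 fine (probability_setT G)).
Qed.

Lemma Gint_le G f g : bounded_measurable f -> bounded_measurable g ->
  (forall b, f b <= g b) -> Gint G f <= Gint G g.
Proof.
by move=> bf bg fg; rewrite !GintE le_Rintegral //; exact: bounded_measurable_integrable.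
Qed.

Lemma Gint_indic G (A : set (Rd R d)) : measurable A -> Gint G (\1_A) = fine (G A).
Proof. by move=> mA; rewrite /Gint integral_indic // setIT. Qed.

Lemma bounded_measurable_indic (A : set (Rd R d)) :
  measurable A -> bounded_measurable (\1_A).
Proof.
move=> mA; split; first exact: measurable_realfun.measurable_indic.
by exists 1 => b; rewrite /indic; case: (b \in A); rewrite ?normr1 ?normr0.
Qed.

Lemma Gint_scale_le G (c : R) f g : 0 <= c ->
  bounded_measurable f -> bounded_measurable g ->
  (forall b, c * f b <= g b) -> c * Gint G f <= Gint G g.
Proof.
move=> c0 bf bg fg; rewrite -GintZ //; apply: Gint_le => //.
exact: bounded_measurableM (bounded_measurable_cst c) bf.
Qed.

End Gint.

Lemma mxentry_norm_le (R : realType) m n (A : 'M[R]_(m, n)) i j : `|A i j| <= `|A|.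
Proof.
rewrite (_ : `|A| = mx_norm A) // mx_normrE; apply/bigmax_geP; right => /=.
by exists (i, j).
Qed.

Section LogitKernel.
Variables (R : realType) (J d : nat).
Implicit Types (x y : 'M[R]_(J, d)) (b : 'rV[R]_d).

Lemma xb_norm_le x j b : `|xb x j b| <= d%:R * (`|x| * `|b|).
Proof.
rewrite /xb (le_trans (ler_norm_sum _ _ _)) //.
rewrite mulr_natl -[X in _ *+ X]card_ord -sumr_const.
by apply: ler_sum => i _; rewrite normrM ler_pM // mxentry_norm_le.
Qed.

Lemma xbB_norm_le x y j b : `|xb x j b - xb y j b| <= d%:R * (`|x - y| * `|b|).
Proof.
rewrite /xb -sumrB (le_trans (ler_norm_sum _ _ _)) //.
rewrite mulr_natl -[X in _ *+ X]card_ord -sumr_const.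
apply: ler_sum => i _; rewrite -mulrBl normrM ler_pM // ?mxentry_norm_le //.
by have := mxentry_norm_le (x - y) j i; rewrite !mxE.
Qed.

Lemma continuous_xb x j : continuous (xb x j).
Proof.
apply: continuous_big => //; first exact: add_continuous.
move=> i _ b; apply: continuousM; first exact: cst_continuous.
exact: (@coord_continuous R 1 d 0 i).
Qed.

Lemma sum_expR_xb_gt0 x b (j : 'I_J) : 0 < \sum_(l < J) expR (xb x l b).
Proof.
by rewrite (bigD1 j) //= ltr_pwDl ?expR_gt0 // sumr_ge0 // => l _; exact: expR_ge0.
Qed.

Lemma kfun_gt0 x b j : 0 < kfun x b j.
Proof. by rewrite divr_gt0 ?expR_gt0 ?(sum_expR_xb_gt0 _ _ j). Qed.

Lemma kfun_le1 x b j : kfun x b j <= 1.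
Proof.
rewrite ler_pdivrMr ?(sum_expR_xb_gt0 _ _ j) // mul1r (bigD1 j) //= lerDl.
by rewrite sumr_ge0 // => l _; exact: expR_ge0.
Qed.

Lemma continuous_kfun x j : continuous (kfun x ^~ j).
Proof.
have cexp l : continuous (fun b => expR (xb x l b)).
  by move=> b; apply: continuous_comp; [exact: continuous_xb | exact: continuous_expR].
move=> b; apply: (@continuousM _ _ (fun c => expR (xb x j c))
  (fun c => (\sum_(l < J) expR (xb x l c))^-1)); first exact: cexp.
apply: continuousV; first by rewrite gt_eqF ?(sum_expR_xb_gt0 _ _ j).
by apply: continuous_big => //; exact: add_continuous.
Qed.

(* Each utility moves by at most [t], so the numerator of the logit shrinks
   and its denominator grows by at most a factor [expR t]. *)
Lemma kfun_ratio_ge x y b j (t : R) :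
  (forall l, `|xb x l b - xb y l b| <= t) ->
  expR (- (t + t)) * kfun y b j <= kfun x b j.
Proof.
move=> ht; have ht' l : - t <= xb x l b - xb y l b <= t by rewrite -ler_norml.
have Sx := sum_expR_xb_gt0 x b j; have Sy := sum_expR_xb_gt0 y b j.
have num : expR (- t) * expR (xb y j b) <= expR (xb x j b).
  by rewrite -expRD ler_expR; have /andP[] := ht' j; lra.
have den : \sum_(l < J) expR (xb x l b) <= expR t * \sum_(l < J) expR (xb y l b).
  rewrite mulr_sumr; apply: ler_sum => l _; rewrite -expRD ler_expR.
  by have /andP[] := ht' l; lra.
rewrite /kfun ler_pdivlMr //; apply: le_trans num.
apply: le_trans (ler_wpM2l _ den) _.
  by rewrite mulr_ge0 ?expR_ge0 // divr_ge0 ?expR_ge0 // ltW.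
rewrite opprD expRD !expRN le_eqVlt; apply/orP; left; apply/eqP.
by field; rewrite gt_eqF ?expR_gt0 // gt_eqF.
Qed.

Lemma kfun_ge x b j (t : R) : (forall l, `|xb x l b| <= t) ->
  expR (- (t + t)) / J%:R <= kfun x b j.
Proof.
move=> ht; have xb0 l : xb (0 : 'M[R]_(J, d)) l b = 0.
  by rewrite /xb big1 // => i _; rewrite mxE mul0r.
have <- : kfun (0 : 'M[R]_(J, d)) b j = J%:R^-1.
  rewrite /kfun xb0 expR0 (eq_bigr (fun=> 1)) => [|l _]; last by rewrite xb0 expR0.
  by rewrite sumr_const card_ord div1r.
by apply: kfun_ratio_ge => l; rewrite xb0 subr0.
Qed.

End LogitKernel.

Section Cutoff.
Variables (R : realType) (d : nat).
Implicit Types (G : Pspace R d) (b : 'rV[R]_d).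

Definition cutoff (r : R) b : R := Num.min 1 (Num.max 0 (r + 1 - `|b|)).

Lemma cutoff_ge0 r b : 0 <= cutoff r b.
Proof. by rewrite le_min ler01 le_max lexx. Qed.

Lemma cutoff_le1 r b : cutoff r b <= 1.
Proof. by rewrite ge_min lexx. Qed.

Lemma cutoff_eq1 r b : `|b| <= r -> cutoff r b = 1.
Proof. by move=> h; apply/min_idPl; rewrite le_max; apply/orP; right; lra. Qed.

Lemma cutoff_gt0 r b : 0 < cutoff r b -> `|b| < r + 1.
Proof. by rewrite lt_min => /andP[_]; rewrite lt_max ltxx /=; lra. Qed.

Lemma continuous_cutoff r : continuous (cutoff r).
Proof.
move=> b; apply: (@continuous_min _ _ (fun=> 1) (fun c => Num.max 0 (r + 1 - `|c|))).
  exact: cst_continuous.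
apply: (@continuous_max _ _ (fun=> 0) (fun c => r + 1 - `|c|)).
  exact: cst_continuous.
by apply: continuousB; [exact: cst_continuous | exact: norm_continuous].
Qed.

Lemma bounded_continuous_cutoff r : bounded_continuous (cutoff r).
Proof.
split; first exact: continuous_cutoff.
by exists 1 => b; rewrite ger0_norm ?cutoff_le1 ?cutoff_ge0.
Qed.

Definition norm_le_set (n : nat) : set (Rd R d) := [set b | `|b| <= n%:R].

Lemma measurable_norm_le_set n : measurable (norm_le_set n).
Proof.
rewrite -(setCK (norm_le_set n)); apply: measurableC; apply: sub_sigma_algebra.
have -> : ~` norm_le_set n = (fun b => `|b|) @^-1` [set r | n%:R < r].
  by apply/seteqP; split => b /=; rewrite /norm_le_set /= ltNge => /negP.
by apply: (continuousP _).1; [exact: norm_continuous | exact: open_gt].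
Qed.

Lemma probability_norm_le_set G (e : R) : 0 < e ->
  exists n, 1 - e < fine (G (norm_le_set n)).
Proof.
move=> e0; have : (G \o norm_le_set) n @[n --> \oo] --> G (\bigcup_n norm_le_set n).
  apply: nondecreasing_cvg_mu => //.
  - exact: measurable_norm_le_set.
  - by apply: bigcup_measurable => n _; exact: measurable_norm_le_set.
  - move=> m n mn; apply/subsetPset => b; rewrite /norm_le_set /= => h.
    by apply: le_trans h _; rewrite ler_nat.
have -> : \bigcup_n norm_le_set n = setT.
  apply/seteqP; split => // b _; exists (Num.truncn `|b|).+1 => //.
  by rewrite /norm_le_set /= ltW // truncnS_gt.
rewrite probability_setT => /fine_cvgP [_ hcv].
have [N _ hN] := cvgr_gt _ hcv (1 - e) ltac:(lra).
by exists N; exact: hN N (leqnn N).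
Qed.

Lemma Gint_cutoff_mass G (e : R) : 0 < e ->
  exists n : nat, 1 - e < Gint G (cutoff n%:R).
Proof.
move=> /(probability_norm_le_set G) [n hn]; exists n; apply: lt_le_trans hn _.
have mB := measurable_norm_le_set n.
rewrite -Gint_indic //; apply: Gint_le.
- exact: bounded_measurable_indic.
- exact/bounded_continuous_measurable/bounded_continuous_cutoff.
move=> b; rewrite indicE; have [|_] := boolP (b \in _); last exact: cutoff_ge0.
by rewrite inE => hb; rewrite cutoff_eq1.
Qed.

End Cutoff.

Section WeakNbhd.
Variables (R : realType) (d : nat).

Definition weak_nbhd (I : finType) (G0 : Pspace R d) (f : I -> 'rV[R]_d -> R)
    (e : R) : set (Pspace R d) :=
  [set G | forall i, `|Gint G (f i) - Gint G0 (f i)| < e].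

Lemma weak_open_nbhd (I : finType) G0 (f : I -> 'rV[R]_d -> R) (e : R) :
  0 < e -> (forall i, bounded_continuous (f i)) -> weak_open (weak_nbhd G0 f e).
Proof.
move=> e0 bf G hG.
pose dist i := `|Gint G (f i) - Gint G0 (f i)|.
pose m := \big[Num.max/0]_i dist i.
have me : m < e by apply: bigmax_lt => // i _; exact: hG.
exists #|I|, (f \o enum_val), (e - m); split; first by rewrite subr_gt0.
split; first by move=> i; exact: bf.
move=> G' /= hG' i.
have := hG' (enum_rank i); rewrite /= enum_rankK => h1.
have h2 : dist i <= m := le_bigmax 0 dist i.
rewrite (_ : _ - _ = Gint G' (f i) - Gint G (f i) + (Gint G (f i) - Gint G0 (f i))).
  by apply: le_lt_trans (ler_normD _ _) _; rewrite /dist in h2; lra.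
by rewrite addrA subrK.
Qed.

End WeakNbhd.

Lemma compact_norm_bounded (R : realType) m n (X : set 'M[R]_(m, n)) :
  compact X -> exists L : R, 0 < L /\ forall x, X x -> `|x| <= L.
Proof.
move=> /compact_bounded [M [Mreal hM]].
exists (`|M| + 1); split; first by rewrite ltr_pwDr.
by move=> x Xx; apply: (hM (`|M| + 1)) => //; rewrite (le_lt_trans (ler_norm M)) // ltrDl.
Qed.

Lemma compact_finite_net (R : realType) m n (X : set 'M[R]_(m, n)) (eta : R) :
  compact X -> 0 < eta ->
  exists s : seq 'M[R]_(m, n), forall x, X x -> exists2 y, y \in s & `|y - x| < eta.
Proof.
rewrite compact_cover => /(_ _ X (ball ^~ eta)) cX eta0.
have [|x Xx|D _ hD] := cX.
- by move=> y _; exact: ball_open.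
- by exists x => //; exact: ballxx.
exists (finmap.enum_fset D) => x /hD [y /= yD hy]; exists y => //.
by move: hy; rewrite -ball_normE.
Qed.

Lemma measurable_compact (R : realType) J d (X : set 'M[R]_(J, d)) :
  compact X -> measurable (X : set (RJd R J d)).
Proof.
move=> cX; rewrite -(setCK X); apply: measurableC; apply: sub_sigma_algebra.
by apply: closed_openC; apply: (compact_closed _ cX); exact: norm_hausdorff.
Qed.

Section IntegralBound.
Local Open Scope ereal_scope.

Lemma le_integral_ge0_bound d (T : measurableType d) (R : realType)
    (mu : {measure set T -> \bar R}) (D : set T) (f g : T -> \bar R) :
  (forall x, D x -> 0 <= g x) -> (forall x, D x -> f x <= g x) ->
  \int[mu]_(x in D) f x <= \int[mu]_(x in D) g x.
Proof.
move=> g0 fg; rewrite integralE.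
apply: (@le_trans _ _ (\int[mu]_(x in D) f^\+ x)).
  by rewrite -[leRHS]sube0 leeB // integral_ge0 // => x _; exact: funeneg_ge0.
rewrite [leLHS]ge0_integralE => [|x _]; last exact: funepos_ge0.
rewrite [leRHS]ge0_integralE //.
apply: ereal_sup_le => _ [h hh <-]; exists h => //= x.
apply: le_trans (hh x) _; rewrite /patch; case: ifPn => // /set_mem Dx.
by rewrite funeposE ge_max g0 // fg.
Qed.

Lemma integral_le_mass1 d (T : measurableType d) (R : realType)
    (mu : {measure set T -> \bar R}) (D : set T) (f : T -> R) (c : R) :
  measurable D -> mu D = 1 -> (0 <= c)%R -> (forall x, D x -> (f x <= c)%R) ->
  \int[mu]_(x in D) (f x)%:E <= c%:E.
Proof.
move=> mD D1 c0 fc; apply: le_trans (le_integral_ge0_bound mu (g := fun=> c%:E) _ _) _.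
- by move=> x _; rewrite lee_fin.
- by move=> x Dx; rewrite lee_fin fc.
by rewrite integral_cst // D1 mule1.
Qed.

End IntegralBound.

Section TruncatedKernel.
Variables (R : realType) (J d : nat).
Implicit Types (G : Pspace R d) (x y : 'M[R]_(J, d)) (b : 'rV[R]_d).

Definition kcut x (r : R) j b := kfun x b j * cutoff r b.

Lemma bounded_continuous_kfun x j : bounded_continuous (kfun x ^~ j).
Proof.
split; first exact: continuous_kfun.
by exists 1 => b; rewrite ger0_norm ?kfun_le1 // ltW ?kfun_gt0.
Qed.

Lemma bounded_continuous_kcut x r j : bounded_continuous (kcut x r j).
Proof.
split.
  move=> b; apply: (@continuousM _ _ (kfun x ^~ j) (cutoff r)).
    exact: continuous_kfun.
  exact: continuous_cutoff.
exists 1 => b; have k0 := ltW (kfun_gt0 x b j); have k1 := kfun_le1 x b j.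
have c0 := cutoff_ge0 r b; have c1 := cutoff_le1 r b.
by rewrite /kcut ger0_norm; [exact: mulr_ile1 | exact: mulr_ge0].
Qed.

(* Side conditions of the [Gint] lemmas, closed by [//] in the proofs below. *)
Let bm_kfun x j := bounded_continuous_measurable (bounded_continuous_kfun x j).
Let bm_kcut x r j := bounded_continuous_measurable (bounded_continuous_kcut x r j).
Let bm_cutoff r := bounded_continuous_measurable (@bounded_continuous_cutoff R d r).
Let bm_one := @bounded_measurable_cst R d 1.

Lemma qfun_le1 G x j : qfun x G j <= 1.
Proof.
rewrite -(Gint_cst G 1); apply: Gint_le => // b.
exact: kfun_le1.
Qed.

Lemma Gint_kcut_le G x r j : Gint G (kcut x r j) <= qfun x G j.
Proof.
apply: Gint_le => // b.
by rewrite /kcut ler_piMr ?cutoff_le1 // ltW ?kfun_gt0.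
Qed.

(* The truncation loses at most the mass [G] puts where the cutoff is below 1,
   because [k (1 - cutoff) <= 1 - cutoff]. *)
Lemma Gint_kcut_ge G x r j :
  qfun x G j - (1 - Gint G (cutoff r)) <= Gint G (kcut x r j).
Proof.
rewrite -(Gint_cst G 1) -GintB // /qfun -GintB //; last exact: bounded_measurableB.
apply: Gint_le => //.
  by apply: bounded_measurableB => //; exact: bounded_measurableB.
move=> b /=; rewrite /kcut -subr_ge0.
rewrite (_ : _ - _ = (1 - kfun x b j) * (1 - cutoff r b)); last by ring.
by rewrite mulr_ge0 // subr_ge0 ?kfun_le1 ?cutoff_le1.
Qed.

Lemma qfun_ge_cutoff G x r j (c : R) : 0 <= c ->
  (forall b, 0 < cutoff r b -> c <= kfun x b j) ->
  c * Gint G (cutoff r) <= qfun x G j.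
Proof.
move=> c0 hc; apply: Gint_scale_le => // b.
have [/hc ck | cb] := ltP 0 (cutoff r b).
  by apply: le_trans ck; rewrite ler_piMr ?cutoff_le1.
have -> : cutoff r b = 0 by apply/eqP; rewrite eq_le cb cutoff_ge0.
by rewrite mulr0 ltW ?kfun_gt0.
Qed.

Lemma kcut_ratio_ge x y r j (t : R) :
  (forall b l, `|b| < r + 1 -> `|xb x l b - xb y l b| <= t) ->
  forall b, expR (- (t + t)) * kcut y r j b <= kcut x r j b.
Proof.
move=> hxy b; rewrite /kcut; have [/cutoff_gt0 hb | cb] := ltP 0 (cutoff r b).
  by rewrite mulrA ler_wpM2r ?cutoff_ge0 // kfun_ratio_ge // => l; exact: hxy.
have -> : cutoff r b = 0 by apply/eqP; rewrite eq_le cb cutoff_ge0.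
by rewrite !mulr0.
Qed.

Lemma qfun_transfer G0 G x y r j (g e : R) : 0 <= g ->
  (forall b, g * kcut y r j b <= kcut x r j b) ->
  (forall b, g * kcut x r j b <= kcut y r j b) ->
  `|Gint G (kcut y r j) - Gint G0 (kcut y r j)| < e ->
  1 - e < Gint G0 (cutoff r) ->
  g * (g * (qfun x G0 j - e) - e) <= qfun x G j.
Proof.
move=> g0 yx xy; rewrite ltr_norml => /andP[hG _] hmass.
have G_yx := Gint_scale_le G g0 (bm_kcut y r j) (bm_kcut x r j) yx.
have G0_xy := Gint_scale_le G0 g0 (bm_kcut x r j) (bm_kcut y r j) xy.
have G0_ky : g * (qfun x G0 j - e) <= Gint G0 (kcut y r j).
  by apply: le_trans G0_xy; rewrite ler_wpM2l //; have := Gint_kcut_ge G0 x r j; lra.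
apply: le_trans (Gint_kcut_le G x r j); apply: le_trans G_yx.
by rewrite ler_wpM2l //; lra.
Qed.

End TruncatedKernel.

(* With [g^2] halfway between [th] and 1, the slack [(1 - g^2) q0] absorbs the
   two errors [e], each at most an eighth of [(1 - th) q0]. *)
Lemma shrink_twice_ge (R : realFieldType) (th g m q0 e : R) :
  0 <= g <= 1 -> g * g = (1 + th) / 2 -> th < 1 -> 0 < m <= q0 ->
  e = (1 - th) * m / 8 -> th * q0 <= g * (g * (q0 - e) - e).
Proof.
move=> /andP[g0 g1] gg th1 /andP[m0 mq] ee.
have e0 : 0 <= e by rewrite ee divr_ge0 // mulr_ge0 //; lra.
have ge : g * e <= e by rewrite ler_piMl.
have -> : g * (g * (q0 - e) - e) = g * g * q0 - g * g * e - g * e by ring.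
have gge : g * g * e <= e by rewrite ler_piMl // gg; lra.
have slack : (g * g - th) * m <= (g * g - th) * q0 by rewrite ler_wpM2l // gg; lra.
have : (g * g - th) * m = 4 * e by rewrite ee gg; field.
lra.
Qed.

Lemma expR_double_sqrt (R : realType) (a : R) : 0 < a < 1 ->
  exists2 t : R, 0 < t & expR (- (t + t)) * expR (- (t + t)) = a.
Proof.
move=> /andP[a0 a1]; exists (- ln a / 4).
  by rewrite divr_gt0 // oppr_gt0 ln_lt0 // a0.
by rewrite -expRD (_ : _ + _ = ln a) ?lnK ?posrE //; field.
Qed.

Section RatioNbhd.
Variables (R : realType) (J d : nat).
Hypotheses (J_gt0 : (0 < J)%N) (d_gt0 : (0 < d)%N).
Variable X : set 'M[R]_(J, d).
Hypothesis cX : compact X.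

Lemma qfun_lbound_compact (G0 : Pspace R d) :
  exists m : R, 0 < m /\ forall x j, X x -> m <= qfun x G0 j.
Proof.
have [L [L0 hL]] := compact_norm_bounded cX.
have [n hn] := Gint_cutoff_mass G0 (ltac:(lra) : 0 < 1 / 2 :> R).
pose t := d%:R * (L * (n%:R + 1)).
have c0 : 0 <= expR (- (t + t)) / J%:R by rewrite divr_ge0 ?expR_ge0.
exists (expR (- (t + t)) / J%:R * (1 / 2)); split.
  by rewrite mulr_gt0 // divr_gt0 ?expR_gt0 // ltr0n.
move=> x j Xx; apply: le_trans (qfun_ge_cutoff G0 (r := n%:R) c0 _).
  by rewrite ler_wpM2l //; lra.
move=> b /cutoff_gt0 hb; apply: kfun_ge => l.
apply: le_trans (xb_norm_le _ _ _) _.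
by rewrite ler_wpM2l // ler_pM // ?hL // ltW.
Qed.

Lemma qfun_ratio_nbhd (G0 : Pspace R d) (th : R) : 0 < th < 1 ->
  exists U, [/\ weak_open U, U G0 &
    forall G, U G -> forall x j, X x -> th * qfun x G0 j <= qfun x G j].
Proof.
move=> /andP[th0 th1].
have [m [m0 hm]] := qfun_lbound_compact G0.
pose e := (1 - th) * m / 8.
have e0 : 0 < e by rewrite divr_gt0 // mulr_gt0 // subr_gt0.
have [n hn] := Gint_cutoff_mass G0 e0; pose r : R := n%:R.
have [t t0 gg] := @expR_double_sqrt R ((1 + th) / 2) ltac:(apply/andP; split; lra).
pose g := expR (- (t + t)).
have g01 : 0 <= g <= 1 by rewrite expR_ge0 expR_le1; lra.
pose eta := t / (d%:R * (r + 1)).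
have eta0 : 0 < eta by rewrite divr_gt0 // mulr_gt0 ?ltr0n // ltr_wpDl ?ler0n.
have [s hs] := compact_finite_net cX eta0.
pose f (p : 'I_(size s) * 'I_J) := kcut (nth 0 s p.1) r p.2.
exists (weak_nbhd G0 f e); split.
- by apply: weak_open_nbhd => // p; exact: bounded_continuous_kcut.
- by move=> p; rewrite subrr normr0.
move=> G UG x j Xx; have [y ys yx] := hs x Xx.
have ys' : (index y s < size s)%N by rewrite index_mem.
have := UG (Ordinal ys', j).
rewrite /f /= nth_index // => hG.
have close (z z' : 'M[R]_(J, d)) : `|z - z'| < eta ->
    forall b l, `|b| < r + 1 -> `|xb z l b - xb z' l b| <= t.
  move=> zz' b l hb; apply: le_trans (xbB_norm_le _ _ _ _) _.
  have -> : t = d%:R * (eta * (r + 1)).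
    by rewrite /eta; field; rewrite !gt_eqF ?ltr0n // ltr_wpDl ?ler0n.
  by rewrite ler_wpM2l // ler_pM // ltW.
apply: le_trans (qfun_transfer (r := r) _ _ _ hG hn).
- by apply: shrink_twice_ge g01 gg th1 _ erefl; rewrite m0 hm.
- exact: expR_ge0.
- by apply: kcut_ratio_ge; apply: close; rewrite distrC.
- exact/kcut_ratio_ge/close.
Qed.

End RatioNbhd.

Lemma KLx_le_ratio (R : realType) J d (G0 G : Pspace R d) (x : 'M[R]_(J, d)) (th : R) :
  0 < th <= 1 -> (forall j, 0 < qfun x G0 j) ->
  (forall j, th * qfun x G0 j <= qfun x G j) -> KLx G0 G x <= J%:R * - ln th.
Proof.
move=> /andP[th0 th1] q0_gt0 hq.
rewrite /KLx mulr_natl -[X in _ *+ X]card_ord -sumr_const.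
apply: ler_sum => j _; have q0 := q0_gt0 j; have q01 := qfun_le1 G0 x j.
have q_gt0 : 0 < qfun x G j by apply: lt_le_trans (hq j); rewrite mulr_gt0.
have lnth : 0 <= - ln th.
  by rewrite -lnV ?posrE // ln_ge0 // invf_ge1.
have lnq : ln (qfun x G0 j / qfun x G j) <= - ln th.
  rewrite -lnV ?posrE // ler_ln ?posrE ?divr_gt0 ?invr_gt0 // ler_pdivrMr //.
  by rewrite -(ler_pM2l th0) mulrA mulfV ?gt_eqF // mul1r.
apply: le_trans (ler_wpM2l (ltW q0) lnq) _.
by rewrite ler_piMl.
Qed.

Theorem lemma2 (R : realType) (J d : nat) (hJ : (2 <= J)%N) (hd : (1 <= d)%N)
  (X : set 'M[R]_(J, d)) (hX : compact X)
  (M : probability (RJd R J d) R) (hM : M X = 1%E)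
  (G0 : Pspace R d) (Pi : probability (PB R d) R)
  (hsupp : forall U : set (Pspace R d), weak_open U -> U G0 -> (0 < Pi U)%E)
  (hpos : forall (j : 'I_J) (x : 'M[R]_(J, d)), X x -> 0 < qfun x G0 j) :
  forall eps : R, 0 < eps ->
    exists A : set (PB R d),
      measurable A /\
      A `<=` [set G : Pspace R d |
                (\int[M]_(x in X) (KLx G0 G x)%:E < eps%:E)%E] /\
      (0 < Pi A)%E.
Proof.
move=> eps eps0.
have J0 : (0 < J)%N by apply: leq_trans hJ.
have J0r : 0 < J%:R :> R by rewrite ltr0n.
pose c := eps / (J%:R + J%:R).
have c0 : 0 < c by rewrite divr_gt0 // addr_gt0.
have th01 : 0 < expR (- c) < 1 by rewrite expR_gt0 expR_lt1 oppr_lt0.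
have [U [Uo UG0 hU]] := qfun_ratio_nbhd J0 hd hX G0 th01.
exists U; split; first exact: sub_sigma_algebra.
split; last exact: hsupp.
move=> G /hU hG /=.
have KL_le x : X x -> KLx G0 G x <= eps / 2.
  move=> Xx; have th1 : 0 < expR (- c) <= 1 by rewrite expR_gt0 expR_le1 oppr_le0 ltW.
  have := KLx_le_ratio th1 (fun j => hpos j x Xx) (fun j => hG x j Xx).
  suff -> : J%:R * - ln (expR (- c)) = eps / 2 by [].
  by rewrite expRK opprK /c; field; rewrite gt_eqF ?addr_gt0.
apply: le_lt_trans (integral_le_mass1 (measurable_compact hX) hM _ KL_le) _.
  by rewrite divr_ge0 // ltW.
by rewrite lte_fin; lra.
Qed.
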